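(* Let $G$ be a finite simple graph with no isolated edges and maximum degree $\Delta$. Let $G'$ be the multigraph obtained from $G$ by contracting every edge $uv$ of $G$ such that $\deg(u)<\Delta/3$, $\deg(v)<\Delta/3$, and neither $u$ nor $v$ has any neighbor other than each other of degree less than $\Delta/3$ (contracting means deleting $uv$ and identifying $u$ and $v$ into one vertex). Then $G'$ is a loopless multigraph with edge multiplicity at most $2$, $\Delta(G')=\Delta$, and the subgraph $H$ of $G'$ induced by the vertices of degree less than $\Delta/3$ in $G'$ has no isolated edges. Moreover, for every positive integer $p$, if $G'$ has an avd-coloring using at most $p$ colors, then so does $G$.
   Context: For a (partial) edge coloring $c$ and a vertex $v$, $S_c(v)$ denotes the set of colors on the colored edges incident to $v$. An avd-coloring of a (multi)graph is a proper edge coloring $c$ (edges sharing an endpoint, including parallel edges, get distinct colors) such that $S_c(u)\neq S_c(v)$ for all adjacent vertices $u,v$. *)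

From mathcomp Require Import all_boot.
Set Implicit Arguments. Unset Strict Implicit. Unset Printing Implicit Defensive.

(** * Simple graphs: [e : rel T] on a finType, symmetric and irreflexive. *)
Section Simple.
Variables (T : finType) (e : rel T).

Definition deg (u : T) : nat := #|[set v | e u v]|.
Definition maxdeg : nat := \max_(u : T) deg u.
Definition low (u : T) : bool := 3 * deg u < maxdeg.

Definition no_isolated_edge : Prop :=
  forall u v, e u v -> ~~ ((deg u == 1) && (deg v == 1)).

Definition contr (u v : T) : bool :=
  [&& e u v, low u, low v,
      [forall w, (e u w && (w != v)) ==> ~~ low w] &
      [forall w, (e v w && (w != u)) ==> ~~ low w]].

(* avd-coloring of the simple graph with colors in {0,..,p-1};
   c u v is the color of the edge uv *)
Definition avd_simple (p : nat) : Prop :=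
  exists c : T -> T -> 'I_p,
    [/\ (forall u v, e u v -> c u v = c v u),
        (forall u v w, e u v -> e u w -> v != w -> c u v != c u w) &
        (forall u v, e u v ->
           c u @: [set w | e u w] != c v @: [set w | e v w])].
End Simple.

Record mgraph := MGraph {
  mV : finType;
  mE : finType;
  msrc : mE -> mV;
  mdst : mE -> mV }.

Section Multi.
Variable M : mgraph.

Definition mends (f : mE M) : {set mV M} := [set msrc f; mdst f].
Definition inc (x : mV M) (f : mE M) : bool := (msrc f == x) || (mdst f == x).

(* degree, loops counted twice *)
Definition mdeg (x : mV M) : nat :=
  #|[set f | msrc f == x]| + #|[set f | mdst f == x]|.
Definition mmaxdeg : nat := \max_(x : mV M) mdeg x.

Definition loopless : Prop := forall f : mE M, msrc f != mdst f.

Definition mult_le2 : Prop :=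
  forall x y : mV M, x != y ->
    #|[set f | ((msrc f == x) && (mdst f == y)) || ((msrc f == y) && (mdst f == x))]| <= 2.

Definition mlow (D : nat) (x : mV M) : bool := 3 * mdeg x < D.

(* the subgraph H induced by vertices with degree < D/3 has no isolated edge,
   i.e. no component consisting of two vertices joined by (one or more) edges *)
Definition low_sub_no_isolated_edge (D : nat) : Prop :=
  forall f : mE M, mlow D (msrc f) -> mlow D (mdst f) ->
    exists g : mE M,
      [&& mlow D (msrc g), mlow D (mdst g),
          inc (msrc f) g || inc (mdst f) g & mends g != mends f].

Definition avd_multi (p : nat) : Prop :=
  exists c : mE M -> 'I_p,
    (forall f g : mE M, f != g ->
       (inc (msrc f) g || inc (mdst f) g) -> c f != c g) /\
    (forall f : mE M,
       c @: [set g | inc (msrc f) g] != c @: [set g | inc (mdst f) g]).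
End Multi.

(** M is (up to isomorphism) the multigraph obtained from the simple graph (T,e)
    by contracting every edge uv with [contr e u v]:
    phi maps vertices of G onto vertices of M, identifying exactly the endpoints
    of contracted edges, and psi is a bijection from the edges of M onto the
    (unordered) non-contracted edges of G compatible with endpoints. *)
Definition is_contraction (T : finType) (e : rel T) (M : mgraph) : Prop :=
  exists (phi : T -> mV M) (psi : mE M -> T * T),
    [/\ (forall x : mV M, exists u, phi u = x),
        (forall u v, phi u = phi v <-> (u = v \/ contr e u v)),
        (forall f, [/\ e (psi f).1 (psi f).2, ~~ contr e (psi f).1 (psi f).2,
                       phi (psi f).1 = msrc f & phi (psi f).2 = mdst f]),
        (forall u v, e u v -> ~~ contr e u v ->
           exists f, psi f = (u, v) \/ psi f = (v, u)) &
        (forall f g, psi f = psi g \/ psi f = ((psi g).2, (psi g).1) -> f = g)].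

From mathcomp Require Import all_boot zify.
Set Implicit Arguments. Unset Strict Implicit. Unset Printing Implicit Defensive.

(* The contracted edges form a matching of low vertices all of whose other
   neighbours are high.  Hence a vertex of G' is the image of one vertex or of
   one contracted pair uv, and no edge of G' joins two merged vertices; a
   merged vertex has degree at most deg u + deg v < 2Δ/3, which gives
   Δ(G') = Δ and, since p >= Δ, leaves a colour missing at it.  An avd-colouring
   of G' is lifted to G by giving each contracted edge such a missing colour.
   Colour sets then agree with those of G' at unmatched vertices; a matched
   vertex (low) and an uncontracted neighbour (high) have colour sets of
   different sizes; and the ends of a contracted edge uv can only share their
   colour set if both have degree 1, i.e. if uv is an isolated edge. *)

Section SimpleGraph.
Variables (T : finType) (e : rel T).
Hypotheses (e_sym : symmetric e) (e_irr : irreflexive e).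

Local Notation D := (maxdeg e).

Lemma contr_sym : symmetric (contr e).
Proof.
move=> u v; rewrite /contr e_sym; congr (_ && _).
by rewrite andbCA; congr (_ && _); congr (_ && _); rewrite andbC.
Qed.

Lemma contr_edge u v : contr e u v -> e u v.
Proof. by case/and5P. Qed.

Lemma contr_low u v : contr e u v -> low e u.
Proof. by case/and5P. Qed.

Lemma contr_nbr_high u v w : contr e u v -> e u w -> w != v -> ~~ low e w.
Proof. by case/and5P=> _ _ _ /forallP/(_ w) + _ euw wv; rewrite euw wv. Qed.

Lemma contr_partner_uniq u v w : contr e u v -> contr e u w -> v = w.
Proof.
move=> cuv cuw; apply/eqP; apply: contraT => vw.
have := contr_nbr_high cuw (contr_edge cuv) vw.
by rewrite contr_sym in cuv; rewrite (contr_low cuv).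
Qed.

Lemma contr_deg_sum u v : contr e u v -> deg e u + deg e v < D.
Proof.
move=> cuv; have := contr_low cuv; rewrite contr_sym in cuv.
have := contr_low cuv; rewrite /low; lia.
Qed.

Definition matched (u : T) : bool := [exists v, contr e u v].

Lemma unmatched_uncontr u v : ~~ matched u -> ~~ contr e u v.
Proof. by apply: contraNN => cuv; apply/existsP; exists v. Qed.

Lemma matched_low u : matched u -> low e u.
Proof. by case/existsP=> v /contr_low. Qed.

Lemma matched_nbr_high u w : matched u -> e u w -> ~~ contr e u w -> ~~ low e w.
Proof.
case/existsP=> v cuv euw nc; apply: (contr_nbr_high cuv euw).
by apply: contraNneq nc => ->.
Qed.

Lemma unmatched_low_nbr a w :
  ~~ matched a -> low e a -> e a w -> low e w -> ~~ matched w.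
Proof.
move=> nma la eaw lw; apply/existsP=> -[w' cw].
have ewa : e w a by rewrite e_sym.
case: (eqVneq a w') => [aw' | ne].
  by move: (unmatched_uncontr w nma); rewrite contr_sym aw' cw.
by move: (contr_nbr_high cw ewa ne); rewrite la.
Qed.

Lemma exists_maxdeg_unmatched : 0 < D -> exists2 w, deg e w = D & ~~ matched w.
Proof.
move=> D_gt0; have : 0 < #|T|.
  case: (pickP (@predT T)) => [w0 _ | none]; first by apply/card_gt0P; exists w0.
  by move: D_gt0; rewrite /maxdeg big_pred0.
case/(eq_bigmax (deg e)) => w degw; exists w; first by rewrite /maxdeg degw.
by apply/negP=> /matched_low; rewrite /low /maxdeg degw; lia.
Qed.

Section Contraction.
Variables (M : mgraph) (phi : T -> mV M) (psi : mE M -> T * T).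
Hypotheses (phi_surj : forall x : mV M, exists u, phi u = x)
  (phi_eq : forall u v, phi u = phi v <-> (u = v \/ contr e u v))
  (psiP : forall f, [/\ e (psi f).1 (psi f).2, ~~ contr e (psi f).1 (psi f).2,
                       phi (psi f).1 = msrc f & phi (psi f).2 = mdst f])
  (psi_surj : forall u v, e u v -> ~~ contr e u v ->
                exists f, psi f = (u, v) \/ psi f = (v, u))
  (psi_inj : forall f g, psi f = psi g \/ psi f = ((psi g).2, (psi g).1) -> f = g).

Lemma phi_contr u v : contr e u v -> phi u = phi v.
Proof. by move=> cuv; apply/phi_eq; right. Qed.

Lemma phi_fiber_unmatched u w : ~~ matched u -> phi w = phi u -> w = u.
Proof.
move=> nmu /phi_eq [//|cwu].
by move: (unmatched_uncontr w nmu); rewrite contr_sym cwu.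
Qed.

Lemma phi_fiber_matched u u' w : contr e u u' -> phi w = phi u -> w = u \/ w = u'.
Proof.
move=> cuu' /phi_eq [->|cwu]; first by left.
by right; apply: esym; apply: (contr_partner_uniq cuu'); rewrite contr_sym.
Qed.

Lemma matched_phi_fiber a w : matched a -> phi w = phi a -> matched w.
Proof.
case/existsP=> a' caa' /(phi_fiber_matched caa') [->|->]; apply/existsP.
  by exists a'.
by exists a; rewrite contr_sym.
Qed.

Lemma card_phi_fiber (x : mV M) : #|[set w | phi w == x]| <= 2.
Proof.
have [a <-] := phi_surj x.
have [/existsP [a' caa'] | nma] := boolP (matched a).
  apply: leq_trans (_ : #|[set a; a']| <= 2); last by rewrite cards2; case: (a != a').
  apply: subset_leq_card; apply/subsetP => w; rewrite !inE.
  by move/eqP/(phi_fiber_matched caa') => [->|->]; rewrite eqxx ?orbT.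
apply: leq_trans (_ : #|[set a]| <= 2); last by rewrite cards1.
apply: subset_leq_card; apply/subsetP => w; rewrite !inE.
by move/eqP/(phi_fiber_unmatched nma) ->.
Qed.

Lemma contraction_loopless : loopless M.
Proof.
move=> f; have [euv ncuv <- <-] := psiP f; apply/eqP => /phi_eq [uv|cuv].
  by move: euv; rewrite uv e_irr.
by rewrite cuv in ncuv.
Qed.

Lemma psi_edge_unmatched f : ~~ matched (psi f).1 || ~~ matched (psi f).2.
Proof.
rewrite -negb_and; apply/andP => -[m1 m2]; have [euv ncuv _ _] := psiP f.
by move: (matched_nbr_high m1 euv ncuv); rewrite matched_low.
Qed.

Definition edges_at (u : T) : {set mE M} :=
  [set f | ((psi f).1 == u) || ((psi f).2 == u)].

Definition other_end (u : T) (f : mE M) : T :=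
  if (psi f).1 == u then (psi f).2 else (psi f).1.

Lemma edges_atP u f :
  f \in edges_at u -> psi f = (u, other_end u f) \/ psi f = (other_end u f, u).
Proof.
rewrite inE /other_end; case: (psi f) => a b /=.
by case: eqP => [->|_] /=; [left | move/eqP ->; right].
Qed.

Lemma psi_inj_unordered f g u v : psi f = (u, v) \/ psi f = (v, u) ->
  psi g = (u, v) \/ psi g = (v, u) -> f = g.
Proof.
move=> Hf Hg; apply: psi_inj.
by case: Hf => ->; case: Hg => -> /=; [left|right|right|left].
Qed.

Lemma psi_unordered_edges_at u v f :
  psi f = (u, v) \/ psi f = (v, u) -> f \in edges_at u.
Proof. by rewrite inE; case=> ->; rewrite eqxx ?orbT. Qed.

Lemma other_end_psi u v f :
  e u v -> psi f = (u, v) \/ psi f = (v, u) -> other_end u f = v.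
Proof.
rewrite /other_end => euv; case=> -> /=; rewrite ?eqxx //.
by case: eqP => // vu; move: euv; rewrite vu e_irr.
Qed.

Lemma edge_other_end u f : f \in edges_at u -> e u (other_end u f).
Proof.
have [euv _ _ _] := psiP f.
by case/edges_atP => psif; rewrite psif /= in euv; rewrite // e_sym.
Qed.

Lemma other_end_inj u : {in edges_at u &, injective (other_end u)}.
Proof.
move=> f g /edges_atP Hf /edges_atP Hg fg; rewrite fg in Hf.
exact: psi_inj_unordered Hf Hg.
Qed.

Lemma card_edges_at u : #|edges_at u| <= deg e u.
Proof.
rewrite -(card_in_imset (@other_end_inj u)) /deg.
apply: subset_leq_card; apply/subsetP => v /imsetP [f Hf ->].
by rewrite inE edge_other_end.
Qed.

Lemma card_edges_at_unmatched u : ~~ matched u -> #|edges_at u| = deg e u.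
Proof.
move=> nmu; apply/eqP; rewrite eqn_leq card_edges_at /=.
rewrite -(card_in_imset (@other_end_inj u)) /deg.
apply: subset_leq_card; apply/subsetP => v; rewrite inE => euv.
have [f psif] := psi_surj euv (unmatched_uncontr v nmu).
apply/imsetP; exists f; first exact: psi_unordered_edges_at psif.
by rewrite (other_end_psi euv psif).
Qed.

Lemma inc_edges_at u f : f \in edges_at u -> inc (phi u) f.
Proof.
rewrite inE /inc; have [_ _ <- <-] := psiP f.
by case/orP => /eqP ->; rewrite eqxx ?orbT.
Qed.

Lemma psi_unordered_inc u v f : psi f = (u, v) \/ psi f = (v, u) -> inc (phi u) f.
Proof. by move/psi_unordered_edges_at/inc_edges_at. Qed.

Lemma incP x f : inc x f -> exists2 w, phi w = x & f \in edges_at w.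
Proof.
rewrite /inc; have [_ _ <- <-] := psiP f; case/orP => /eqP <-.
  by exists (psi f).1; rewrite // inE eqxx.
by exists (psi f).2; rewrite // inE eqxx orbT.
Qed.

Lemma inc_unmatched u : ~~ matched u -> [set f | inc (phi u) f] = edges_at u.
Proof.
move=> nmu; apply/setP => f; rewrite inE; apply/idP/idP; last exact: inc_edges_at.
by case/incP => w /(phi_fiber_unmatched nmu) ->.
Qed.

Lemma inc_contr u u' : contr e u u' ->
  [set f | inc (phi u) f] = edges_at u :|: edges_at u'.
Proof.
move=> cuu'; apply/setP => f; rewrite inE in_setU; apply/idP/idP.
  by case/incP => w /(phi_fiber_matched cuu') [->|->] ->; rewrite ?orbT.
by rewrite (phi_contr cuu'); case/orP => /inc_edges_at //; rewrite -(phi_contr cuu').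
Qed.

Lemma mdeg_card_inc (x : mV M) : mdeg x = #|[set f | inc x f]|.
Proof.
have -> : [set f | inc x f] = [set f | msrc f == x] :|: [set f | mdst f == x].
  by apply/setP => f; rewrite !inE.
rewrite /mdeg -cardsUI [X in _ + X](_ : _ = 0) ?addn0 //.
apply/eqP; rewrite cards_eq0; apply/eqP/setP => f; rewrite !inE.
apply/negP => /andP [/eqP src_f /eqP dst_f].
by move: (contraction_loopless f); rewrite src_f dst_f eqxx.
Qed.

Lemma mdeg_unmatched u : ~~ matched u -> mdeg (phi u) = deg e u.
Proof.
by move=> nmu; rewrite mdeg_card_inc inc_unmatched // card_edges_at_unmatched.
Qed.

Lemma mlow_unmatched u : ~~ matched u -> mlow D (phi u) = low e u.
Proof. by move=> nmu; rewrite /mlow /low mdeg_unmatched. Qed.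

Lemma mdeg_contr u u' : contr e u u' -> mdeg (phi u) <= deg e u + deg e u'.
Proof.
move=> cuu'; rewrite mdeg_card_inc (inc_contr cuu').
apply: leq_trans (leq_add (card_edges_at u) (card_edges_at u')).
by rewrite -cardsUI leq_addr.
Qed.

Definition parallel_edges (x y : mV M) : {set mE M} :=
  [set f | ((msrc f == x) && (mdst f == y)) || ((msrc f == y) && (mdst f == x))].

Lemma parallel_edgesC x y : parallel_edges x y = parallel_edges y x.
Proof. by apply/setP => f; rewrite !inE orbC. Qed.

Lemma card_parallel_edges_unmatched x b :
  ~~ matched b -> x != phi b -> #|parallel_edges x (phi b)| <= 2.
Proof.
move=> nmb xb; have sub : parallel_edges x (phi b) \subset edges_at b.
  apply/subsetP => f; rewrite inE -inc_unmatched // inE /inc.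
  by case/orP => /andP [/eqP -> /eqP ->]; rewrite eqxx ?orbT.
have inj : {in parallel_edges x (phi b) &, injective (other_end b)}.
  by move=> f g /(subsetP sub) Hf /(subsetP sub) Hg; apply: other_end_inj.
rewrite -(card_in_imset inj); apply: leq_trans (card_phi_fiber x).
apply: subset_leq_card; apply/subsetP => o /imsetP [f Hf ->]; rewrite inE.
have psif := edges_atP (subsetP sub f Hf).
move: Hf; rewrite inE; have [_ _ <- <-] := psiP f.
case: psif => -> /=; case/orP => /andP [/eqP src_f /eqP dst_f] //;
  by move: xb; rewrite ?src_f ?dst_f eqxx.
Qed.

Lemma parallel_edges_matched a b :
  matched a -> matched b -> parallel_edges (phi a) (phi b) = set0.
Proof.
move=> ma mb; apply/setP => f; rewrite !inE; apply/negP => Hf.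
have [_ _ src_f dst_f] := psiP f.
have end_matched w : phi w = phi a \/ phi w = phi b -> matched w.
  by case=> /matched_phi_fiber; apply.
have := psi_edge_unmatched f; rewrite !end_matched //;
  case/orP: Hf => /andP [/eqP ? /eqP ?];
  by first [left; congruence | right; congruence].
Qed.

Lemma contraction_mult_le2 : mult_le2 M.
Proof.
move=> x y; have [a <-] := phi_surj x; have [b <-] := phi_surj y => ab.
rewrite -/(parallel_edges (phi a) (phi b)).
have [mb | nmb] := boolP (matched b); last exact: card_parallel_edges_unmatched.
have [ma | nma] := boolP (matched a); first by rewrite parallel_edges_matched ?cards0.
by rewrite parallel_edgesC card_parallel_edges_unmatched // eq_sym.
Qed.

Lemma contraction_mmaxdeg : mmaxdeg M = D.
Proof.
apply/eqP; rewrite eqn_leq; apply/andP; split.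
  apply/bigmax_leqP => x _; have [u <-] := phi_surj x.
  have [/existsP [u' cuu'] | nmu] := boolP (matched u).
    by apply: leq_trans (mdeg_contr cuu') _; apply: ltnW; apply: contr_deg_sum.
  by rewrite mdeg_unmatched //; apply: leq_bigmax.
have [->|D_gt0] := posnP D; first by [].
have [w degw nmw] := exists_maxdeg_unmatched D_gt0.
by rewrite -degw -mdeg_unmatched //; apply: leq_bigmax.
Qed.

Lemma low_edge_to_other_low a b w :
  ~~ matched a -> ~~ matched b -> low e a -> e a w -> w != b -> low e w ->
  exists g : mE M, [&& mlow D (msrc g), mlow D (mdst g), inc (phi a) g &
                      mends g != [set phi a; phi b]].
Proof.
move=> nma nmb la eaw wb lw; have nmw := unmatched_low_nbr nma la eaw lw.
have [g psig] := psi_surj eaw (unmatched_uncontr w nma).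
have [_ _ src_g dst_g] := psiP g.
have mlow_end z : z = a \/ z = w -> mlow D (phi z).
  by case=> ->; rewrite mlow_unmatched.
have w_end : phi w \in mends g.
  by rewrite /mends -src_g -dst_g !inE; case: psig => ->; rewrite eqxx ?orbT.
have w_not_ab : phi w \notin [set phi a; phi b].
  rewrite !inE; apply/norP; split; apply/eqP.
    by move/(phi_fiber_unmatched nma) => wa; move: eaw; rewrite wa e_irr.
  by move/(phi_fiber_unmatched nmb) => wb'; move: wb; rewrite wb' eqxx.
exists g; apply/and4P; split.
- by rewrite -src_g; apply: mlow_end; case: psig => ->; [left|right].
- by rewrite -dst_g; apply: mlow_end; case: psig => ->; [right|left].
- exact: psi_unordered_inc psig.
- by apply: contraNneq w_not_ab => <-.
Qed.

Lemma contraction_low_sub : low_sub_no_isolated_edge M D.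
Proof.
move=> f; have [eab ncab src_f dst_f] := psiP f.
set a := (psi f).1 in eab ncab src_f *; set b := (psi f).2 in eab ncab dst_f *.
have eba : e b a by rewrite e_sym.
have ncba : ~~ contr e b a by rewrite contr_sym.
have mends_f : mends f = [set phi a; phi b] by rewrite /mends src_f dst_f.
rewrite -src_f -dst_f => mla mlb.
have nma : ~~ matched a.
  apply/negP => ma; have nlb := matched_nbr_high ma eab ncab.
  have nmb : ~~ matched b by apply: contraNN nlb; apply: matched_low.
  by move: mlb; rewrite mlow_unmatched // (negbTE nlb).
have nmb : ~~ matched b.
  apply/negP => mb; have nla := matched_nbr_high mb eba ncba.
  by move: mla; rewrite mlow_unmatched // (negbTE nla).
rewrite mlow_unmatched // in mla; rewrite mlow_unmatched // in mlb.
move: ncab; rewrite /contr eab mla mlb /= negb_and.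
case/orP => /forallPn [w]; rewrite negb_imply negbK => /andP [/andP [ew wn] lw].
  have [g /and4P [? ? ? ?]] := low_edge_to_other_low nma nmb mla ew wn lw.
  by exists g; rewrite mends_f; apply/and4P; split=> //; apply/orP; left.
have [g /and4P [? ? ? ?]] := low_edge_to_other_low nmb nma mlb ew wn lw.
by exists g; rewrite mends_f setUC; apply/and4P; split=> //; apply/orP; right.
Qed.

Section LiftColouring.
Hypothesis no_iso : no_isolated_edge e.
Variables (p : nat) (p_gt0 : 0 < p) (c : mE M -> 'I_p).
Hypotheses
  (c_proper : forall f g, f != g -> inc (msrc f) g || inc (mdst f) g -> c f != c g)
  (c_avd : forall f, c @: [set g | inc (msrc f) g] != c @: [set g | inc (mdst f) g]).

Local Notation inc_set x := [set g | inc x g].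

Lemma c_inj_at x : {in inc_set x &, injective c}.
Proof.
move=> f g; rewrite !inE => xf xg; apply: contra_eq => fg; apply: c_proper fg _.
by case/orP: xf => /eqP ->; rewrite xg ?orbT.
Qed.

Lemma c_inj_psi u u' v v' f g : phi u = phi u' ->
  psi f = (u, v) \/ psi f = (v, u) -> psi g = (u', v') \/ psi g = (v', u') ->
  c f = c g -> f = g.
Proof.
move=> uu' psif psig; apply: (@c_inj_at (phi u)); rewrite inE.
  exact: psi_unordered_inc psif.
by rewrite uu'; apply: psi_unordered_inc psig.
Qed.

Lemma maxdeg_le_colours : D <= p.
Proof.
have [->|D_gt0] := posnP D; first by [].
have [w <- nmw] := exists_maxdeg_unmatched D_gt0.
rewrite -card_edges_at_unmatched // -inc_unmatched //.
rewrite -(card_in_imset (@c_inj_at (phi w))).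
by apply: leq_trans (max_card _) _; rewrite card_ord.
Qed.

(* Both defaults below are junk: [missing_colour] matters only at merged
   vertices, where some colour is missing, and the default of [lift_colour] is
   reached only on non-edges. *)
Definition missing_colour (x : mV M) : 'I_p :=
  odflt (Ordinal p_gt0) [pick k | k \notin c @: inc_set x].

Lemma missing_colour_contr u u' :
  contr e u u' -> missing_colour (phi u) \notin c @: inc_set (phi u).
Proof.
move=> cuu'; rewrite /missing_colour; case: pickP => [k //| all_used] /=; exfalso.
have : p <= #|c @: inc_set (phi u)|.
  rewrite -{1}(card_ord p); apply: subset_leq_card; apply/subsetP => k _.
  exact/negbFE/all_used.
have := leq_imset_card c (inc_set (phi u)); rewrite -mdeg_card_inc.
have := mdeg_contr cuu'; have := contr_deg_sum cuu'; have := maxdeg_le_colours.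
lia.
Qed.

Definition lift_colour (u v : T) : 'I_p :=
  if contr e u v then missing_colour (phi u)
  else odflt (Ordinal p_gt0) (omap c [pick f | (psi f == (u, v)) || (psi f == (v, u))]).

Lemma lift_colour_psi u v f : ~~ contr e u v ->
  psi f = (u, v) \/ psi f = (v, u) -> lift_colour u v = c f.
Proof.
move=> ncuv psif; rewrite /lift_colour (negbTE ncuv).
case: pickP => [g psig | none] /=.
  by rewrite (@psi_inj_unordered g f u v) //; case/orP: psig => /eqP; [left|right].
by move: (none f); case: psif => ->; rewrite eqxx ?orbT.
Qed.

Lemma lift_colour_uncontr u v : e u v -> ~~ contr e u v ->
  exists2 f, lift_colour u v = c f & psi f = (u, v) \/ psi f = (v, u).
Proof.
move=> euv ncuv; have [f psif] := psi_surj euv ncuv.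
by exists f => //; apply: lift_colour_psi.
Qed.

Lemma lift_colour_sym u v : e u v -> lift_colour u v = lift_colour v u.
Proof.
move=> euv; have [cuv | ncuv] := boolP (contr e u v).
  by rewrite /lift_colour cuv contr_sym cuv (phi_contr cuv).
have ncvu : ~~ contr e v u by rewrite contr_sym.
have [f psif] := psi_surj euv ncuv.
rewrite (lift_colour_psi ncuv psif) (@lift_colour_psi _ _ f ncvu) //.
by case: psif; [right|left].
Qed.

Lemma lift_colour_contr_neq u v w : contr e u v -> e u w -> w != v ->
  lift_colour u v != lift_colour u w.
Proof.
move=> cuv euw wv.
have ncuw : ~~ contr e u w.
  by apply: contraNN wv => cuw; rewrite (contr_partner_uniq cuv cuw).
have [g -> psig] := lift_colour_uncontr euw ncuw.
rewrite /lift_colour cuv; apply: contraNneq (missing_colour_contr cuv) => ->.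
by rewrite imset_f // inE (psi_unordered_inc psig).
Qed.

Lemma lift_colour_proper u v w : e u v -> e u w -> v != w ->
  lift_colour u v != lift_colour u w.
Proof.
move=> euv euw vw.
have [cuv | ncuv] := boolP (contr e u v).
  by apply: lift_colour_contr_neq; rewrite // eq_sym.
have [cuw | ncuw] := boolP (contr e u w).
  by rewrite eq_sym; apply: lift_colour_contr_neq.
have [f -> psif] := lift_colour_uncontr euv ncuv.
have [g -> psig] := lift_colour_uncontr euw ncuw.
apply: contra_neq vw => /(c_inj_psi (erefl (phi u)) psif psig) fg.
by rewrite -(other_end_psi euv psif) -(other_end_psi euw psig) fg.
Qed.

Definition colour_set (u : T) : {set 'I_p} := lift_colour u @: [set w | e u w].

Lemma colour_set_unmatched u : ~~ matched u -> colour_set u = c @: inc_set (phi u).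
Proof.
move=> nmu; have ncu := unmatched_uncontr _ nmu.
apply/setP => k; apply/imsetP/imsetP.
  case=> z; rewrite inE => euz ->; have [f -> psif] := lift_colour_uncontr euz (ncu z).
  by exists f; rewrite // inE (psi_unordered_inc psif).
case=> f; rewrite inc_unmatched // => uf ->.
exists (other_end u f); first by rewrite inE edge_other_end.
by apply/esym/lift_colour_psi; [exact: ncu | case: (edges_atP uf); [left|right]].
Qed.

Lemma colour_set_contr_deg1 u v :
  contr e u v -> colour_set u = colour_set v -> deg e u = 1.
Proof.
move=> cuv same; have euv := contr_edge cuv.
have cvu : contr e v u by rewrite contr_sym.
have vu : v != u by apply: contraTneq euv => ->; rewrite e_irr.
rewrite /deg (_ : [set w | e u w] = [set v]) ?cards1 //.
apply/setP => w; rewrite !inE; apply/idP/eqP => [euw|->] //; apply/eqP.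
apply: contraT => wv; have ncuw : ~~ contr e u w.
  by apply: contraNN wv => cuw; rewrite (contr_partner_uniq cuv cuw).
have [f cf psif] := lift_colour_uncontr euw ncuw.
have : lift_colour u w \in colour_set v by rewrite -same imset_f // inE.
case/imsetP => z; rewrite inE => evz.
have [-> | zu] := eqVneq z u.
  rewrite cf {1}/lift_colour cvu -(phi_contr cuv) => cf_missing.
  move: (missing_colour_contr cuv).
  by rewrite -cf_missing imset_f // inE (psi_unordered_inc psif).
have ncvz : ~~ contr e v z.
  by apply: contraNN zu => cvz; rewrite (contr_partner_uniq cvu cvz).
have [g -> psig] := lift_colour_uncontr evz ncvz.
rewrite cf => /(c_inj_psi (phi_contr cuv) psif psig) fg.
have : f \in edges_at u := psi_unordered_edges_at psif.
by rewrite fg inE; case: psig => -> /=; rewrite (negbTE zu) (negbTE vu).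
Qed.

Lemma colour_set_matched_neq u v :
  matched u -> e u v -> ~~ contr e u v -> colour_set u != colour_set v.
Proof.
move=> mu euv ncuv; apply/negP => /eqP same.
have := matched_nbr_high mu euv ncuv; have := matched_low mu.
have : #|colour_set u| <= deg e u by apply: leq_imset_card.
have : #|colour_set v| = deg e v.
  apply: card_in_imset => a b; rewrite !inE => eva evb.
  by apply: contra_eq => ab; apply: lift_colour_proper.
by rewrite same /low; lia.
Qed.

Lemma lift_colour_avd : avd_simple e p.
Proof.
exists lift_colour; split; [exact: lift_colour_sym | exact: lift_colour_proper |].
move=> u v euv; rewrite -!/(colour_set _).
have [cuv | ncuv] := boolP (contr e u v).
  apply/negP => /eqP same; have cvu : contr e v u by rewrite contr_sym.
  move: (no_iso euv).
  by rewrite (colour_set_contr_deg1 cuv same) (colour_set_contr_deg1 cvu (esym same)).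
have [mu | nmu] := boolP (matched u); first exact: colour_set_matched_neq.
have evu : e v u by rewrite e_sym.
have ncvu : ~~ contr e v u by rewrite contr_sym.
have [mv | nmv] := boolP (matched v).
  by rewrite eq_sym; apply: colour_set_matched_neq.
rewrite !colour_set_unmatched //; have [f psif] := psi_surj euv ncuv.
have := c_avd f; have [_ _ <- <-] := psiP f.
by case: psif => -> //=; rewrite eq_sym.
Qed.

End LiftColouring.
End Contraction.
End SimpleGraph.

Theorem mainTheorem2 (T : finType) (e : rel T) :
  symmetric e -> irreflexive e -> no_isolated_edge e ->
  forall G' : mgraph, is_contraction e G' ->
    [/\ loopless G', mult_le2 G', mmaxdeg G' = maxdeg e,
        low_sub_no_isolated_edge G' (maxdeg e) &
        forall p : nat, 0 < p -> avd_multi G' p -> avd_simple e p].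
Proof.
move=> e_sym e_irr no_iso G' [phi [psi [phi_surj phi_eq psiP psi_surj psi_inj]]].
split.
- exact: (contraction_loopless e_irr phi_eq psiP).
- exact: (contraction_mult_le2 e_sym phi_surj phi_eq psiP psi_inj).
- exact: (contraction_mmaxdeg e_sym e_irr phi_surj phi_eq psiP psi_surj psi_inj).
- exact: (contraction_low_sub e_sym e_irr phi_eq psiP psi_surj psi_inj).
move=> p p_gt0 [c [c_proper c_avd]].
exact: (lift_colour_avd e_sym e_irr phi_eq psiP psi_surj psi_inj no_iso p_gt0
  c_proper c_avd).
Qed.
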